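(* Let $k\ge 1$ and $n\ge k$ be fixed. There is a streaming algorithm that, at every time at which the window contains $n$ elements, maintains a uniformly random subset of size $k$ (sampling without replacement, every $k$-subset of the active elements equally likely) of the current sequence-based sliding window of size $n$, using $O(k)$ memory in the worst case.
   Context: A data stream is a sequence $p_0,p_1,p_2,\dots$ of elements observed one at a time and only once. In the sequence-based sliding window model with window size $n$, after $N\ge n$ elements have arrived the active (non-expired) elements are the last $n$ arrived elements; all other arrived elements are expired. Memory is measured in the number of stored elements/machine words. *)

From mathcomp Require Import all_boot all_order all_algebra.
From Stdlib Require List.
Set Implicit Arguments. Unset Strict Implicit. Unset Printing Implicit Defensive.
Import Order.TTheory GRing.Theory Num.Theory.
Local Open Scope ring_scope.

(* A memory cell stores either a stream element or a machine word (nat). *)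
Definition cell (T : Type) := (T + nat)%type.
(* The memory state of an algorithm: a list of cells; memory = its length. *)
Definition mstate (T : Type) := seq (cell T).

(* A finitely supported probability distribution with rational weights. *)
Definition fdist (S : Type) := seq (rat * S).

Definition is_fdist (S : Type) (d : fdist S) : Prop :=
  all (fun p => 0 <= p.1) d /\ \sum_(p <- d) p.1 = 1.

(* A randomized streaming algorithm over elements of type T:
   - init : initial memory,
   - step : on the current memory and the newly arrived element, a random
            next memory (finitely supported distribution),
   - out  : the reported sample, as (element, arrival index) pairs. *)
Record salg (T : Type) := SAlg {
  init : mstate T;
  step : mstate T -> T -> fdist (mstate T);
  out  : mstate T -> seq (T * nat)
}.

Fixpoint run (T : Type) (A : salg T) (s : nat -> T) (N : nat)
  : fdist (mstate T) :=
  match N with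
  | 0 => [:: (1, init A)]
  | N'.+1 =>
      flatten [seq [seq (p.1 * q.1, q.2) | q <- step A p.2 (s N')]
              | p <- run A s N']
  end.

Definition prob (S : Type) (d : fdist S) (P : S -> bool) : rat :=
  \sum_(p <- d | P p.2) p.1.

Definition words (T : Type) (m : mstate T) : seq nat :=
  pmap (fun c => match c with inr w => Some w | inl _ => None end) m.

Definition in_window (n N i : nat) : bool := (N - n <= i < N)%N.

Definition sw_sampler (T : Type) (k n : nat) (A : salg T) (s : nat -> T) : Prop :=
  (forall m x, is_fdist (step A m x)) /\
  (forall N, (n <= N)%N ->
     (forall p, List.In p (run A s N) -> 0 < p.1 ->
        exists S : seq nat,
          [/\ uniq S, size S = k, all (in_window n N) S &
              out A p.2 = [seq (s i, i) | i <- S]]) /\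
     (forall X : seq nat, uniq X -> size X = k -> all (in_window n N) X ->
        prob (run A s N) (fun m => perm_eq [seq q.2 | q <- out A m] X)
        = ('C(n, k)%:R)^-1)).

(* Worst-case memory bound: at every time N, every reachable memory state has
   at most M cells, and each stored word has value at most (N+n+2)^c,
   i.e. O(log(N+n)) bits. *)
Definition mem_bound (T : Type) (A : salg T) (s : nat -> T) (n M c : nat) : Prop :=
  forall N p, List.In p (run A s N) -> 0 < p.1 ->
    (size p.2 <= M)%N /\ all (fun w => w <= (N + n + 2) ^ c)%N (words p.2).

From mathcomp Require Import all_boot all_order all_algebra.
From mathcomp Require Import zify.
Set Implicit Arguments. Unset Strict Implicit. Unset Printing Implicit Defensive.
Import GRing.Theory Num.Theory.

(* Cut the stream into blocks of n consecutive positions. Within the current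
   block the sampler maintains a uniformly random permutation of the positions
   seen so far, by inserting each new position at a uniformly random place, but
   stores only its first k entries; when a block is complete, this prefix becomes
   the stored prefix of the previous block. All histories of random choices are
   equally likely, and they cover the pairs (permutation of the previous block,
   permutation of the current block) evenly.
   At time N the window consists of the survivors of the previous block followed
   by the current block, which has as many positions as the previous block has
   expired ones. Replacing the expired positions in the permutation of the
   previous block, from left to right, by the permutation of the current block
   maps the pairs of block permutations evenly onto the permutations of the
   window; and the output (the stored survivors, completed by a prefix of the
   stored current block) is, up to order, the first k entries of that
   permutation, hence a uniform k-subset of the window. The memory holds N and
   at most 2k (element, position) pairs. *)

(** * Insertion, replacement and permutations *)

Fixpoint ins (A : Type) (r : nat) (y : A) (l : seq A) : seq A :=
  match r, l with
  | 0, _ => y :: l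
  | r'.+1, x :: l' => x :: ins r' y l'
  | _.+1, [::] => [:: y]
  end.

Section Insertion.
Variable A : Type.
Implicit Types (y : A) (l : seq A).

Lemma map_ins (B : Type) (f : A -> B) r y l :
  map f (ins r y l) = ins r (f y) (map f l).
Proof. by elim: l r => [|x l IH] [|r] //=; rewrite IH. Qed.

Lemma take_ins k r y l : take k (ins r y (take k l)) = take k (ins r y l).
Proof.
elim: l k r => [|x l IH] [|k] [|r] //=; last by rewrite IH.
by case: k => //= k; rewrite take_takel.
Qed.

End Insertion.

Section EqInsertion.
Variable A : eqType.
Implicit Types (y : A) (l : seq A).

Lemma perm_ins r y l : perm_eq (ins r y l) (y :: l).
Proof.
elim: l r => [|x l IH] [|r] //=.
apply: (@perm_trans _ (x :: y :: l)); first by rewrite perm_cons.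
by rewrite -[x :: y :: l]/([:: x] ++ [:: y] ++ l) perm_catCA.
Qed.

Lemma index_ins r y l : y \notin l -> r <= size l -> index y (ins r y l) = r.
Proof.
elim: l r => [|x l IH] [|r] //=; rewrite ?eqxx // inE negb_or => /andP[yx yl] rl.
by rewrite eq_sym (negbTE yx) IH.
Qed.

Lemma rem_ins r y l : y \notin l -> rem y (ins r y l) = l.
Proof.
elim: l r => [|x l IH] [|r] //=; rewrite ?eqxx // inE negb_or => /andP[yx yl].
by rewrite eq_sym (negbTE yx) IH.
Qed.

Lemma ins_index_rem y l : y \in l -> ins (index y l) y (rem y l) = l.
Proof.
elim: l => [|x l IH] //=; rewrite inE eq_sym.
by case: eqP => [-> //|_ /= yl]; rewrite IH.
Qed.

End EqInsertion.

Lemma allpairs_pair_uniq (A B : eqType) (s : seq A) (t : seq B) :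
  uniq s -> uniq t -> uniq [seq (a, b) | a <- s, b <- t].
Proof. by move=> us ut; apply: allpairs_uniq => // -[? ?] [? ?] _ _ [-> ->]. Qed.

Lemma perm_map_bij (A B : eqType) (f : A -> B) (g : B -> A) (sa : seq A) (sb : seq B) :
  uniq sa -> uniq sb -> {in sa, forall a, f a \in sb} -> {in sb, forall b, g b \in sa} ->
  {in sa, cancel f g} -> {in sb, cancel g f} -> perm_eq (map f sa) sb.
Proof.
move=> ua ub fab gba fK gK; apply: uniq_perm => //.
  by rewrite (map_inj_in_uniq (can_in_inj fK)).
move=> b; apply/mapP/idP => [[a aa ->]|bb]; first exact: fab.
by exists (g b); rewrite ?gK ?gba.
Qed.

Lemma perm_ins_permutations (A : eqType) (x : A) (l : seq A) : x \notin l ->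
  perm_eq [seq ins r x L | L <- permutations l, r <- iota 0 (size l).+1]
          (permutations (x :: l)).
Proof.
move=> xl; set pos := iota 0 (size l).+1.
have -> : [seq ins r x L | L <- permutations l, r <- pos] =
          map (fun g => ins g.2 x g.1) [seq (L, r) | L <- permutations l, r <- pos].
  by rewrite map_allpairs.
apply: (perm_map_bij (g := fun L => (rem x L, index x L))).
- by rewrite allpairs_pair_uniq ?permutations_uniq ?iota_uniq.
- exact: permutations_uniq.
- move=> ? /allpairsP[[L r] [/= + _ ->]]; rewrite !mem_permutations => Ll.
  by rewrite (perm_trans (perm_ins _ _ _)) // perm_cons.
- move=> L; rewrite mem_permutations => Lxl.
  have xL : x \in L by rewrite (perm_mem Lxl) mem_head.
  rewrite allpairs_f // ?mem_permutations.
    by rewrite -(perm_cons x) -(permPl (perm_to_rem xL)).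
  by rewrite mem_iota add0n -[(size l).+1]/(size (x :: l)) -(perm_size Lxl) index_mem.
- move=> ? /allpairsP[[L r] [/= + + ->]]; rewrite mem_permutations mem_iota => Ll rl.
  have xL : x \notin L by rewrite (perm_mem Ll).
  by rewrite /= rem_ins // index_ins // (perm_size Ll).
- move=> L; rewrite mem_permutations => Lxl.
  by rewrite /= ins_index_rem // (perm_mem Lxl) mem_head.
Qed.

Lemma count_take_permutations (T : eqType) (W X : seq T) k :
  uniq W -> uniq X -> size X = k -> {subset X <= W} ->
  count (fun Z => perm_eq (take k Z) X) (permutations W) = k`! * (size W - k)`!.
Proof.
move=> uW uX sX XW; set R := filter (predC (mem X)) W.
have WXR : perm_eq W (X ++ R).
  rewrite -(perm_filterC (mem X) W) perm_cat2r.
  apply: uniq_perm; rewrite ?filter_uniq // => z; rewrite mem_filter.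
  by apply/andP/idP => [[]//|zX]; split => //; apply: XW.
have sR : size R = size W - k by rewrite (perm_size WXR) size_cat sX addKn.
have prefix_perm : perm_eq
    (map (fun g => g.1 ++ g.2) [seq (a, b) | a <- permutations X, b <- permutations R])
    [seq Z <- permutations W | perm_eq (take k Z) X].
  apply: (perm_map_bij (g := fun Z => (take k Z, drop k Z))).
  - by rewrite allpairs_pair_uniq ?permutations_uniq.
  - by rewrite filter_uniq ?permutations_uniq.
  - move=> ? /allpairsP[[a b] [/= + + ->]]; rewrite !mem_permutations => aX bR.
    have sa : size a = k by rewrite (perm_size aX).
    rewrite mem_filter mem_permutations take_size_cat // aX (permPr WXR).
    exact: perm_cat.
  - move=> Z; rewrite mem_filter mem_permutations => /andP[ZX ZW].
    apply: allpairs_f; rewrite mem_permutations // -(perm_cat2l X) -(permPr WXR).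
    by rewrite -(permPr ZW) -[in X in perm_eq _ X](cat_take_drop k Z) perm_cat2r perm_sym.
  - move=> ? /allpairsP[[a b] [/= + _ ->]]; rewrite mem_permutations => aX.
    have sa : size a = k by rewrite (perm_size aX).
    by rewrite take_size_cat // drop_size_cat.
  - by move=> Z _; rewrite /= cat_take_drop.
rewrite -size_filter -(perm_size prefix_perm) size_map size_allpairs.
by rewrite !size_permutations ?filter_uniq // sX sR.
Qed.

Fixpoint repl (T : Type) (p : pred T) (l src : seq T) : seq T :=
  match l with
  | [::] => [::]
  | x :: l' => if p x then head x src :: repl p l' (behead src)
               else x :: repl p l' src
  end.

Section Replace.
Variables (T : Type) (p : pred T).
Implicit Types (l src : seq T).

Lemma take_repl k l src : take k (repl p l src) = repl p (take k l) src.
Proof. by elim: l k src => [|x l IH] [|k] src //=; case: (p x); rewrite //= IH. Qed.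

Lemma filter_repl l src :
  size src = count p l -> all p src -> filter p (repl p l src) = src.
Proof.
elim: l src => [|x l IH] src /=; first by case: src.
case: ifP => px; rewrite ?add0n ?add1n; last by move=> cs ps; rewrite /= px IH.
by case: src => [|y src] //= [cs] /andP[-> ps]; rewrite IH.
Qed.

Lemma repl_repl l src :
  size src = count p l -> all p src -> repl p (repl p l src) (filter p l) = l.
Proof.
elim: l src => [|x l IH] src //=.
case: ifP => px; rewrite ?add0n ?add1n; last by move=> cs ps; rewrite /= px IH.
by case: src => [|y src] //= [cs] /andP[-> ps]; rewrite /= IH.
Qed.

End Replace.

Lemma perm_repl (T : eqType) (p : pred T) (l src : seq T) :
  count p l <= size src ->
  perm_eq (repl p l src) (filter (predC p) l ++ take (count p l) src).
Proof.
elim: l src => [|x l IH] src /=; first by rewrite take0.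
case: ifP => px /=; rewrite ?add0n ?add1n; last by move=> cs; rewrite perm_cons IH.
case: src => [|y src] //= cs.
by rewrite -(cat1s y (take _ _)) perm_sym perm_catCA /= perm_cons perm_sym IH.
Qed.

Lemma perm_take_repl (T : eqType) (p : pred T) k (l src : seq T) :
  count p l <= size src ->
  perm_eq (take k (repl p l src))
          (filter (predC p) (take k l) ++ take (count p (take k l)) src).
Proof.
move=> cs; rewrite take_repl perm_repl // (leq_trans _ cs) //.
by rewrite -{2}(cat_take_drop k l) count_cat leq_addr.
Qed.

Lemma perm_filter_split (T : eqType) (p : pred T) (X Y L : seq T) :
  all p X -> all (predC p) Y -> perm_eq L (X ++ Y) ->
  [/\ perm_eq (filter p L) X, perm_eq (filter (predC p) L) Y & count p L = size X].
Proof.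
move=> pX pY LXY.
have fX : filter p (X ++ Y) = X.
  rewrite filter_cat (all_filterP pX) (eq_in_filter (a2 := pred0)) ?filter_pred0 ?cats0 //.
  by move=> y /(allP pY) /negbTE.
have fY : filter (predC p) (X ++ Y) = Y.
  rewrite filter_cat (all_filterP pY) (eq_in_filter (a2 := pred0)) ?filter_pred0 //.
  by move=> x /(allP pX) /= ->.
have fpX : perm_eq (filter p L) X by rewrite -fX perm_filter.
by rewrite -size_filter (perm_size fpX) fpX -fY perm_filter.
Qed.

(** * Maps with fibres of equal size *)

Lemma sum_nat_of_bool (A : Type) (P : pred A) (s : seq A) :
  \sum_(a <- s) (P a : nat) = count P s.
Proof. by elim: s => [|a s IH]; rewrite ?big_nil ?big_cons ?IH. Qed.

Definition uniform_fibres (A B : Type) (f : A -> B) (s : seq A) (t : seq B) :=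
  exists c, forall F : B -> nat, \sum_(a <- s) F (f a) = c * \sum_(b <- t) F b.

Section UniformFibres.
Variables A B : Type.

Lemma uniform_fibres_comp (C : Type) (f : A -> B) (g : B -> C) s t u :
  uniform_fibres f s t -> uniform_fibres g t u -> uniform_fibres (g \o f) s u.
Proof.
move=> [c1 fst] [c2 gtu]; exists (c1 * c2) => F.
by rewrite (fst (F \o g)) gtu mulnA.
Qed.

Lemma uniform_fibres_snd (s : seq A) (t : seq B) :
  uniform_fibres snd [seq (a, b) | a <- s, b <- t] t.
Proof.
exists (size s) => F.
by rewrite big_allpairs /= big_const_seq count_predT iter_addn_0 mulnC.
Qed.

Lemma uniform_fibres_count (f : A -> B) s t : uniform_fibres f s t ->
  exists c, forall P : pred B, count (preim f P) s = c * count P t.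
Proof.
move=> [c Hc]; exists c => P.
by rewrite -!sum_nat_of_bool; exact: (Hc (fun b => P b : nat)).
Qed.

End UniformFibres.

Lemma uniform_fibres_perm (A : Type) (B : eqType) (f : A -> B) s t :
  perm_eq (map f s) t -> uniform_fibres f s t.
Proof. by move=> fst; exists 1 => F; rewrite mul1n -(perm_big _ fst) big_map. Qed.

Lemma uniform_fibres_mem (A B : eqType) (f : A -> B) s t :
  uniform_fibres f s t -> {in s, forall a, f a \in t}.
Proof.
move=> /uniform_fibres_count[c Hc] a sa; apply/negPn/negP => fat.
have : count (preim f (predC (mem t))) s = 0.
  by rewrite Hc (eq_in_count (a2 := pred0)) ?count_pred0 ?muln0 // => b /= ->.
by move/eqP; rewrite -leqn0 leqNgt -has_count; case/negP; apply/hasP; exists a.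
Qed.

Lemma uniform_fibres_repl (T : eqType) (p : pred T) (E S P : seq T) :
  size E = size P -> all p E -> all p P -> all (predC p) S ->
  uniform_fibres (fun g => repl p g.1 g.2)
    [seq (a, b) | a <- permutations (E ++ S), b <- permutations P]
    (permutations (S ++ P)).
Proof.
move=> sEP pE pP pS.
pose Phi g := (filter p g.1, repl p g.1 g.2).
pose Psi h := (repl p h.2 h.1, filter p h.2).
have PhiK a b : size b = count p a -> all p b -> Psi (Phi (a, b)) = (a, b).
  by move=> sb pb; rewrite /Psi /Phi /= repl_repl ?filter_repl.
have PsiK a b : size a = count p b -> all p a -> Phi (Psi (a, b)) = (a, b).
  by move=> sa pa; rewrite /Psi /Phi /= repl_repl ?filter_repl.
apply: (uniform_fibres_comp (f := Phi) _ (uniform_fibres_snd (permutations E) _)).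
apply/uniform_fibres_perm/(perm_map_bij (g := Psi)).
- by rewrite allpairs_pair_uniq ?permutations_uniq.
- by rewrite allpairs_pair_uniq ?permutations_uniq.
- move=> ? /allpairsP[[a b] [/= + + ->]]; rewrite !mem_permutations => aES bP.
  have [fa fca ca] := perm_filter_split pE pS aES.
  rewrite allpairs_f ?mem_permutations //= (permPl (perm_repl _))
    ?ca ?sEP ?(perm_size bP) //.
  by rewrite -(perm_size bP) take_size perm_cat.
- move=> ? /allpairsP[[a b] [/= + + ->]]; rewrite !mem_permutations => aE bSP.
  have [fb fcb cb] := perm_filter_split pP pS (perm_trans bSP (permEl (perm_catC S P))).
  rewrite allpairs_f ?mem_permutations //= (permPl (perm_repl _))
    ?cb -?sEP ?(perm_size aE) //.
  by rewrite -(perm_size aE) take_size perm_catC perm_cat.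
- move=> ? /allpairsP[[a b] [/= + + ->]]; rewrite !mem_permutations => aES bP.
  have [_ _ ca] := perm_filter_split pE pS aES.
  by rewrite PhiK // ?(perm_size bP) -?sEP // (perm_all _ bP).
- move=> ? /allpairsP[[a b] [/= + + ->]]; rewrite !mem_permutations => aE bSP.
  have [_ _ cb] := perm_filter_split pP pS (perm_trans bSP (permEl (perm_catC S P))).
  by rewrite PsiK // ?(perm_size aE) ?sEP // (perm_all _ aE).
Qed.

(** * The sampler *)

Definition elems (T : Type) (m : mstate T) : seq T :=
  pmap (fun c => if c is inl x then Some x else None) m.

Definition encode (T : Type) (N : nat) (prev cur : seq (T * nat)) : mstate T :=
  let l := prev ++ cur in
  [:: inr N, inr (size prev) & map inl (unzip1 l) ++ map inr (unzip2 l)].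

Definition decode (T : Type) (m : mstate T) : nat * seq (T * nat) * seq (T * nat) :=
  if m is inr N :: inr a :: rest then
    let l := zip (elems rest) (words rest) in (N, take a l, drop a l)
  else (0, [::], [::]).

Section Encoding.
Variable T : Type.
Implicit Types (l : seq T) (w : seq nat).

Lemma elems_split l w : elems (map inl l ++ map inr w) = l.
Proof.
rewrite /elems pmap_cat (_ : pmap _ (map inr w) = [::]) ?cats0; last by elim: w.
by elim: l => //= x l ->.
Qed.

Lemma words_split l w : words (map inl l ++ map inr w) = w.
Proof.
rewrite /words pmap_cat (_ : pmap _ (map inl l) = [::]) //; last by elim: l.
by elim: w => //= x w ->.
Qed.

Lemma decode_encode N (prev cur : seq (T * nat)) :
  decode (encode N prev cur) = (N, prev, cur).
Proof. by rewrite /= elems_split words_split zip_unzip take_size_cat ?drop_size_cat. Qed.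

Lemma words_encode N (prev cur : seq (T * nat)) :
  words (encode N prev cur) = [:: N, size prev & unzip2 (prev ++ cur)].
Proof.
set l := prev ++ cur.
by change (words (encode N prev cur)) with
  [:: N, size prev & words (map inl (unzip1 l) ++ map inr (unzip2 l))]; rewrite words_split.
Qed.

Lemma size_encode N (prev cur : seq (T * nat)) :
  size (encode N prev cur) = (size prev + size cur).*2.+2.
Proof. by rewrite /= size_cat !size_map size_cat addnn. Qed.

End Encoding.

Definition sample_step (k n : nat) (T : Type) (m : mstate T) (x : T) :
    fdist (mstate T) :=
  let: (N, prev, cur) := decode m in
  let fresh := N %% n == 0 in
  [seq (((N %% n).+1%:R : rat)^-1%R,
        encode N.+1 (if fresh then cur else prev)
                    (take k (ins r (x, N) (if fresh then [::] else cur))))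
  | r <- iota 0 (N %% n).+1].

Definition sample_out (k n : nat) (T : Type) (m : mstate T) : seq (T * nat) :=
  let: (N, prev, cur) := decode m in
  let alive := [seq q <- prev | N - n <= q.2] in
  alive ++ take (k - size alive) cur.

Definition sampler (k n : nat) (T : Type) : salg T :=
  SAlg (encode 0 [::] [::]) (@sample_step k n T) (@sample_out k n T).

Lemma sample_step_fdist k n T (m : mstate T) x : is_fdist (sample_step k n m x).
Proof.
rewrite /sample_step; case: (decode m) => [[N ?] ?]; split.
  by rewrite all_map; apply/allP => r _ /=; rewrite invr_ge0 ler0n.
rewrite big_map big_const_seq count_predT size_iota iter_addr addr0.
by rewrite -[(_ *+ _)%R]mulr_natr mulVf // pnatr_eq0.
Qed.

(** * Histories of random choices *)

Section Configurations.
Variable n : nat.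

(* A history of random choices is recorded by the full permutations (a, c) of
   the previous and the current block produced by the insertions; the sampler
   keeps only [take k a] and [take k c]. *)
Definition config_step N (g : seq nat * seq nat) r :=
  let fresh := N %% n == 0 in
  (if fresh then g.2 else g.1, ins r N (if fresh then [::] else g.2)).

Fixpoint configs N : seq (seq nat * seq nat) :=
  if N is N'.+1 then
    [seq config_step N' g r | g <- configs N', r <- iota 0 (N' %% n).+1]
  else [:: ([::], [::])].

Definition encode_config k (T : Type) (s : nat -> T) N (g : seq nat * seq nat) :=
  encode N [seq (s i, i) | i <- take k g.1] [seq (s i, i) | i <- take k g.2].

Lemma sample_step_config k T (s : nat -> T) N g :
  sample_step k n (encode_config k s N g) (s N) =
  [seq (((N %% n).+1%:R : rat)^-1%R, encode_config k s N.+1 (config_step N g r))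
  | r <- iota 0 (N %% n).+1].
Proof.
rewrite /sample_step /encode_config decode_encode; apply: eq_map => r /=.
by case: ifP => _; rewrite !map_take map_ins ?take_ins.
Qed.

Lemma size_configs N : size (configs N.+1) = size (configs N) * (N %% n).+1.
Proof. by rewrite size_allpairs size_iota. Qed.

Lemma run_sampler k T (s : nat -> T) N :
  run (sampler k n T) s N =
  [seq (((size (configs N))%:R : rat)^-1%R, encode_config k s N g) | g <- configs N].
Proof.
elim: N => [|N IH]; first by rewrite /= invr1.
rewrite size_configs natrM invfM [run _ _ _]/= IH allpairs_mapl map_allpairs.
under eq_allpairsr => g do rewrite sample_step_config.
by rewrite allpairs_mapr.
Qed.

Lemma size_configs_gt0 N : 0 < size (configs N).
Proof. by elim: N => // N IH; rewrite size_configs muln_gt0 IH. Qed.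

End Configurations.

Section Blocks.
Variable n : nat.
Hypothesis n_gt0 : 0 < n.

(* The block of the last arrived position N - 1 starts at [block_start N]. *)
Definition block_start N := N.-1 %/ n * n.
Definition cur_block N := iota (block_start N) (N - block_start N).
Definition prev_block N :=
  if n <= block_start N then iota (block_start N - n) n else [::].
Definition block_perms N :=
  [seq (a, b) | a <- permutations (prev_block N), b <- permutations (cur_block N)].

Lemma block_startS N : block_start N.+1 = N - N %% n.
Proof. by rewrite /block_start /= {2}(divn_eq N n) addnK. Qed.

Lemma block_start_bounds N : 0 < N ->
  [/\ N - n <= block_start N < N & n <= block_start N \/ block_start N = 0].
Proof.
case: N => [//|N] _; rewrite block_startS.
have := divn_eq N n; have := ltn_pmod N n_gt0.
case: (N %/ n) => [|q]; rewrite ?mulSn; lia.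
Qed.

Lemma blocks_fresh N : N %% n = 0 ->
  cur_block N.+1 = [:: N] /\ prev_block N.+1 = cur_block N.
Proof.
move=> Nn0; rewrite /cur_block /prev_block block_startS Nn0 subn0 subSnn; split => //.
case: N Nn0 => [|N] Nn0; first by rewrite /block_start leqNgt n_gt0.
have nN : n <= N.+1 by apply: dvdn_leq => //; rewrite /dvdn Nn0.
have NnE : N %% n = n.-1.
  have := divn_eq N.+1 n; rewrite Nn0 addn0; case: (N.+1 %/ n) => [//|q].
  rewrite mulSn => NE; have -> : N = q * n + n.-1 by lia.
  by rewrite modnMDl modn_small // ltn_predL.
rewrite nN block_startS NnE; congr iota; lia.
Qed.

Lemma blocks_grow N : N %% n != 0 ->
  [/\ cur_block N.+1 = rcons (cur_block N) N, prev_block N.+1 = prev_block N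
    & size (cur_block N) = N %% n].
Proof.
case: N => [|N]; first by rewrite mod0n.
rewrite /cur_block /prev_block !block_startS modnS; case: ifP => // _ _.
rewrite subSS size_iota; set b := N - N %% n.
have := leq_mod N n; have -> : N.+2 - b = N.+1 - b + 1 by rewrite /b; lia.
rewrite iotaD cats1 /b; split => //; [congr rcons | ]; lia.
Qed.

Lemma block_start_le N : block_start N <= N.
Proof. by rewrite /block_start (leq_trans (leq_divM _ _)) ?leq_pred. Qed.

Lemma cur_block_lt N i : i \in cur_block N -> i < N.
Proof. by rewrite mem_iota subnKC ?block_start_le // => /andP[]. Qed.

Lemma prev_block_lt N i : i \in prev_block N -> i < block_start N.
Proof.
by rewrite /prev_block; case: ifP => // bn; rewrite mem_iota subnK // => /andP[].
Qed.

Lemma block_perms_lt N g : g \in block_perms N -> {in g.1 ++ g.2, forall i, i < N}.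
Proof.
move=> /allpairsP[[a c] [/= + + ->]] i; rewrite !mem_permutations mem_cat => aprev ccur.
rewrite (perm_mem aprev) (perm_mem ccur) => /orP[/prev_block_lt lt_b | /cur_block_lt //].
exact: leq_trans lt_b (block_start_le N).
Qed.

Lemma config_step_uniform N :
  uniform_fibres (fun g => config_step n N g.1 g.2)
    [seq (g, r) | g <- block_perms N, r <- iota 0 (N %% n).+1] (block_perms N.+1).
Proof.
rewrite /config_step /block_perms; case: (eqVneq (N %% n) 0) => Nn.
  have [-> ->] := blocks_fresh Nn; rewrite Nn.
  have [c Hc] :=
    uniform_fibres_snd (permutations (prev_block N)) (permutations (cur_block N)).
  exists c => F; rewrite big_allpairs; under eq_bigr do rewrite big_seq1.
  rewrite (Hc (fun b => F (b, [:: N]))) big_allpairs.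
  by under [in RHS]eq_bigr do rewrite big_seq1.
have [-> -> sz] := blocks_grow Nn; exists 1 => F; rewrite mul1n.
rewrite !big_allpairs; apply: eq_bigr => a _; rewrite -sz.
rewrite (perm_big _ (perm_permutations (permEl (perm_rcons _ _)))) /=.
rewrite -(perm_big _ (perm_ins_permutations _)); last first.
  by apply/negP => /cur_block_lt; rewrite ltnn.
by rewrite big_allpairs_dep /=.
Qed.

Lemma configs_uniform N : uniform_fibres id (configs n N) (block_perms N).
Proof.
elim: N => [|N [c IH]].
  exists 1 => F; rewrite mul1n /block_perms /prev_block /cur_block /block_start.
  by rewrite div0n mul0n leqNgt n_gt0.
have [c' Hc'] := config_step_uniform N; exists (c * c') => F.
rewrite -[configs n N.+1]/[seq config_step n N g r | g <- configs n N,
                                                     r <- iota 0 (N %% n).+1].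
rewrite big_allpairs_dep (IH (fun g => \sum_(r <- _) F (config_step n N g r))).
by rewrite -mulnA -Hc' [in RHS]big_allpairs.
Qed.

Lemma configs_sub N g : g \in configs n N -> g \in block_perms N.
Proof. exact: (uniform_fibres_mem (configs_uniform N)). Qed.

End Blocks.

(** * The window *)

Section Window.
Variables n N k : nat.
Hypotheses (n_gt0 : 0 < n) (nN : n <= N) (kn : k <= n).

Definition window := iota (N - n) n.

Definition survivor i := N - n <= i < block_start n N.

Definition window_perm (g : seq nat * seq nat) :=
  if N - block_start n N < n then repl (predC survivor) g.1 g.2 else g.2.

Definition sample_pos (g : seq nat * seq nat) : seq nat :=
  let alive := [seq i <- take k g.1 | N - n <= i] in
  alive ++ take (k - size alive) (take k g.2).

Lemma mem_window i : (i \in window) = in_window n N i.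
Proof. by rewrite mem_iota /in_window subnK. Qed.

Lemma window_split : N - block_start n N < n ->
  let b := block_start n N in let t := N - b in
  [/\ prev_block n N = iota (b - n) t ++ iota (N - n) (n - t),
      window = iota (N - n) (n - t) ++ cur_block n N & n <= b].
Proof.
move=> tn b t; have [/andP[bN Nb] bn] := block_start_bounds n_gt0 (leq_trans n_gt0 nN).
have {bn} bn : n <= b by case: bn => // b0; move: tn; rewrite /t /b b0; lia.
have iota_cut m a c : a <= c -> iota m c = iota m a ++ iota (m + a) (c - a).
  by move=> ac; rewrite -iotaD subnKC.
rewrite /prev_block /window /cur_block -/b bn (iota_cut _ t n) ?(ltnW tn) //.
rewrite (iota_cut _ (n - t) n) ?leq_subr //.
by split => //; congr (_ ++ iota _ _); rewrite /t; lia.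
Qed.

Lemma window_perm_uniform :
  uniform_fibres window_perm (block_perms n N) (permutations window).
Proof.
rewrite /window_perm /block_perms; case: ltnP => tn.
  have [-> -> bn] := window_split tn.
  apply: uniform_fibres_repl; rewrite ?size_iota //; apply/allP => i;
    rewrite mem_iota /survivor /=; lia.
have [/andP[bN Nb] _] := block_start_bounds n_gt0 (leq_trans n_gt0 nN).
have -> : cur_block n N = window by rewrite /cur_block /window; congr iota; lia.
exact: uniform_fibres_snd.
Qed.

Lemma sample_pos_window_perm g : g \in block_perms n N ->
  perm_eq (sample_pos g) (take k (window_perm g)).
Proof.
move=> /allpairsP[[a c] [/= + + ->]]; rewrite !mem_permutations => aprev ccur.
have a_lt i : i \in take k a -> i < block_start n N.
  by move/mem_take; rewrite (perm_mem aprev); apply: prev_block_lt.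
have [/andP[bN Nb] _] := block_start_bounds n_gt0 (leq_trans n_gt0 nN).
rewrite /sample_pos /window_perm /=; case: ltnP => tn; last first.
  rewrite (eq_in_filter (a2 := pred0)) ?filter_pred0 => [|i /a_lt /=]; last lia.
  by rewrite subn0 take_takel.
have [prevE _ bn] := window_split tn; rewrite prevE in aprev.
set p := predC survivor.
have pE : all p (iota (block_start n N - n) (N - block_start n N)).
  by apply/allP => i; rewrite mem_iota /p /survivor /=; lia.
have pS : all (predC p) (iota (N - n) (n - (N - block_start n N))).
  by apply/allP => i; rewrite mem_iota /p /survivor /=; lia.
have [_ _ ca] := perm_filter_split pE pS aprev.
rewrite (permPr (perm_take_repl k _)); last by rewrite ca (perm_size ccur) !size_iota.
have -> : [seq i <- take k a | N - n <= i] = filter (predC p) (take k a).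
  by apply: eq_in_filter => i /a_lt; rewrite /p /survivor /=; lia.
have sk : size (take k a) = k.
  by rewrite size_takel // (perm_size aprev) size_cat !size_iota; lia.
have -> : k - size (filter (predC p) (take k a)) = count p (take k a).
  by rewrite size_filter -{1}sk -(count_predC p) addnK.
by rewrite take_takel // -{2}sk count_size.
Qed.

Lemma sample_pos_sound g : g \in configs n N ->
  [/\ uniq (sample_pos g), size (sample_pos g) = k & all (in_window n N) (sample_pos g)].
Proof.
move=> /(configs_sub n_gt0) g_in; have gZ := sample_pos_window_perm g_in.
have := uniform_fibres_mem window_perm_uniform g_in; rewrite mem_permutations => Zwin.
rewrite (perm_uniq gZ) (perm_size gZ) (perm_all _ gZ).
rewrite take_uniq ?(perm_uniq Zwin) ?iota_uniq //.
rewrite size_takel ?(perm_size Zwin) ?size_iota //; split => //.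
by apply/allP => i /mem_take; rewrite (perm_mem Zwin) mem_window.
Qed.

Lemma sample_pos_uniform X : uniq X -> size X = k -> all (in_window n N) X ->
  count (fun g => perm_eq (sample_pos g) X) (configs n N) * 'C(n, k) = size (configs n N).
Proof.
move=> uX sX wX.
have [c Hc] := uniform_fibres_count
  (uniform_fibres_comp (configs_uniform n_gt0 N) window_perm_uniform).
rewrite (eq_in_count (a2 := preim window_perm (fun Z => perm_eq (take k Z) X))); last first.
  move=> g /(configs_sub n_gt0) g_in /=.
  by rewrite (permPl (sample_pos_window_perm g_in)).
rewrite Hc count_take_permutations ?iota_uniq ?size_iota //; last first.
  by move=> i iX; rewrite mem_window; apply: (allP wX).
rewrite -count_predT (eq_count (a2 := preim window_perm predT)) // Hc.
rewrite count_predT size_permutations ?iota_uniq // size_iota.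
by rewrite -mulnA [_ * 'C(_, _)]mulnC bin_fact.
Qed.

End Window.

Lemma In_mem (A : eqType) (x : A) (l : seq A) : List.In x l -> x \in l.
Proof. by elim: l => //= y l IH [->|/IH]; rewrite inE ?eqxx // => ->; rewrite orbT. Qed.

Section Correctness.
Variables (k n : nat) (T : Type) (s : nat -> T).
Hypotheses (k_gt0 : 0 < k) (kn : k <= n).

Let n_gt0 : 0 < n. Proof. exact: leq_trans k_gt0 kn. Qed.

Lemma in_run_sampler N p : List.In p (run (sampler k n T) s N) ->
  exists2 g, g \in configs n N & p.2 = encode_config k s N g.
Proof. by rewrite run_sampler => /List.in_map_iff[g [<- /In_mem g_in]]; exists g. Qed.

Lemma sample_out_config N g :
  sample_out k n (encode_config k s N g) = [seq (s i, i) | i <- sample_pos n N k g].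
Proof.
rewrite /sample_out /encode_config decode_encode /sample_pos.
by rewrite filter_map size_map map_cat !map_take.
Qed.

Lemma sampler_correct : sw_sampler k n (sampler k n T) s.
Proof.
split=> [m x | N nN]; first exact: sample_step_fdist.
split=> [p p_in _ | X uX sX wX].
  have [g g_in ->] := in_run_sampler p_in.
  have [uniq_g size_g win_g] := sample_pos_sound n_gt0 nN kn g_in.
  by exists (sample_pos n N k g); rewrite /= sample_out_config.
rewrite run_sampler /prob big_map big_const_seq iter_addr addr0.
rewrite (eq_count (a2 := fun g => perm_eq (sample_pos n N k g) X)) => [|g]; last first.
  by rewrite /= sample_out_config -map_comp map_id_in.
have binP : ('C(n, k)%:R : rat) != 0%R by rewrite pnatr_eq0 -lt0n bin_gt0.
apply: (mulIf binP); rewrite mulVf // -[(_^-1 *+ _)%R]mulr_natr -mulrA -natrM.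
by rewrite sample_pos_uniform // mulVf // pnatr_eq0 -lt0n size_configs_gt0.
Qed.

Lemma sampler_mem_bound : mem_bound (sampler k n T) s n (6 * k) 1.
Proof.
move=> N p p_in _; have [g /(configs_sub n_gt0) g_in ->] := in_run_sampler p_in.
rewrite /encode_config size_encode words_encode !size_map !size_take_min expn1; split.
  by have := geq_minl k (size g.1); have := geq_minl k (size g.2); lia.
apply/allP => w; rewrite !inE => /or3P[/eqP->|/eqP->|]; first lia.
  by have := geq_minl k (size g.1); lia.
rewrite -map_cat /unzip2 -map_comp map_id_in // mem_cat => w_in.
have : w \in g.1 ++ g.2 by rewrite mem_cat; case/orP: w_in => /mem_take ->; rewrite ?orbT.
by move/(block_perms_lt g_in); lia.
Qed.

End Correctness.

Theorem mainTheorem2 :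
  exists C c : nat, forall k n : nat, (1 <= k)%N -> (k <= n)%N ->
    exists A : forall T : Type, salg T,
      forall (T : Type) (s : nat -> T),
        sw_sampler k n (A T) s /\ mem_bound (A T) s n (C * k) c.
Proof.
exists 6, 1 => k n k_gt0 kn; exists (sampler k n) => T s.
by split; [apply: sampler_correct | apply: sampler_mem_bound].
Qed.
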